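(* There are absolute constants $C_1,C_2>0$ such that for every $d\in\mathbb{N}$ and every real $N\ge C_1d$, $$|B^2_N|\le C_2|B^2_N\cap\mathbb{Z}^d|.$$ Consequently, for every $N\ge C_1d$, $$C_2^{-1}|B^2_N|\le|B^2_N\cap\mathbb{Z}^d|\le 2e^{1/(8C_1^2)}|B^2_N|.$$
   Context: For $r>0$, $B^2_r=\{x\in\mathbb{R}^d:|x|\le r\}$ is the closed Euclidean ball of radius $r$ centered at the origin; $|B^2_r\cap\mathbb{Z}^d|$ is the number of lattice points in it and $|B^2_r|$ is its Lebesgue measure. *)

From Stdlib Require Import Reals Lra Lia ZArith List.
Open Scope R_scope.

Definition zrange (K : nat) : list Z :=
  map (fun i => (Z.of_nat i - Z.of_nat K)%Z) (seq 0 (2 * K + 1)).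

(* lat d r2 = number of z in Z^d with z_1^2 + ... + z_d^2 <= r2.
   For an integer z with z^2 <= r2 we have |z| <= z^2 <= r2 < up r2,
   so ranging over |z| <= Z.to_nat (up r2) enumerates all candidates. *)
Fixpoint lat (d : nat) (r2 : R) : nat :=
  match d with
  | O => if Rle_dec 0 r2 then 1%nat else 0%nat
  | S d' =>
      fold_right (fun z acc => (lat d' (r2 - IZR z ^ 2) + acc)%nat) 0%nat
                 (zrange (Z.to_nat (up r2)))
  end.

Definition lattice_count (d : nat) (N : R) : nat := lat d (N ^ 2).

(* Volume (Lebesgue measure) of the unit Euclidean ball in R^d:
   omega_0 = 1, omega_1 = 2, omega_(d+2) = 2 PI / (d+2) * omega_d
   (equivalently PI^(d/2) / Gamma(d/2 + 1)). *)
Fixpoint unit_ball_vol (d : nat) : R :=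
  match d with
  | O => 1
  | S O => 2
  | S ((S d'') as d') => 2 * PI / INR (S d') * unit_ball_vol d''
  end.

Definition ball_volume (d : nat) (N : R) : R := unit_ball_vol d * N ^ d.

(* Write V_d(y) := omega_d (max y 0)^(d/2) for the volume of the d-ball of squared radius y.
   For d >= 2 we show, by induction on d,
       V_d(r2 - d/4) / 8  <=  #{z in Z^d | |z|^2 <= r2}  <=  2 V_d(r2 + d/4).
   Slicing along the first coordinate writes the count in dimension d+1 as the sum over z in Z of
   counts in dimension d with squared radius r2 - z^2.  Since y |-> (max y 0)^(d/2) is convex for
   d >= 2, this sum is bounded by the integral of V_d(B - t^2) dt from above by the midpoint rule
   and from below by the trapezoid rule, each at the cost of 1/4 in the squared radius, and by
   Cavalieri the integral is V_(d+1)(B).  For N >= d the shift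
   d/4 of N^2 changes N^d by a factor between 3/4 and exp(1/8); hence C1 = 1 and C2 = 11 >= 8 * 4/3. *)

From Stdlib Require Import Reals Lra Lia ZArith List.
From Coquelicot Require Import Coquelicot.
Open Scope R_scope.

(** * Convexity of the ball profile *)

(* [unit_ball_vol d * ball_profile d y] is the volume of the d-ball of squared radius [y]. *)
Definition ball_profile (d : nat) (y : R) : R := sqrt (Rmax y 0) ^ d.

Lemma ball_profile_nonneg d y : 0 <= ball_profile d y.
Proof. apply pow_le, sqrt_pos. Qed.

Lemma ball_profile_le d x y : x <= y -> ball_profile d x <= ball_profile d y.
Proof.
  intro Hxy. apply pow_incr. split; [apply sqrt_pos|].
  apply sqrt_le_1_alt. unfold Rmax; destruct (Rle_dec x 0), (Rle_dec y 0); lra.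
Qed.

Lemma ball_profile_nonpos d y : (1 <= d)%nat -> y <= 0 -> ball_profile d y = 0.
Proof.
  intros Hd Hy. unfold ball_profile. rewrite Rmax_right, sqrt_0 by lra. apply pow_i. lia.
Qed.

Lemma ball_profile_sq d x : 0 <= x -> ball_profile d (x ^ 2) = x ^ d.
Proof.
  intro Hx. unfold ball_profile. rewrite Rmax_left by nra. now rewrite <- Rsqr_pow2, sqrt_Rsqr.
Qed.

Lemma continuous_ball_profile d y : continuous (ball_profile d) y.
Proof.
  apply continuous_ext with (fun y => sqrt ((y + Rabs y) / 2) ^ d).
  { intro x. unfold ball_profile, Rmax, Rabs.
    destruct (Rle_dec x 0), (Rcase_abs x); do 2 f_equal; lra. }
  apply (continuous_comp (fun y => sqrt ((y + Rabs y) / 2)) (fun x => x ^ d)).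
  - apply continuous_sqrt_comp, continuity_pt_filterlim. reg.
  - apply continuity_pt_filterlim. reg.
Qed.

Lemma ex_RInt_ball_profile_quad d B a b : ex_RInt (fun t => ball_profile d (B - t ^ 2)) a b.
Proof.
  apply (@ex_RInt_continuous R_CompleteNormedModule). intros t _.
  apply (continuous_comp (fun t => B - t ^ 2)); [|apply continuous_ball_profile].
  apply continuity_pt_filterlim. reg.
Qed.

(* The graph of y |-> y^((k+2)/2) lies above its tangent at y = p^2. *)
Lemma pow_tangent_sq k p q : 0 <= p -> 0 <= q ->
  p ^ (k + 2) + INR (k + 2) / 2 * p ^ k * (q ^ 2 - p ^ 2) <= q ^ (k + 2).
Proof.
  intros Hp Hq.
  set (T k := p ^ (k + 2) + INR (k + 2) / 2 * p ^ k * (q ^ 2 - p ^ 2) <= q ^ (k + 2)).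
  enough (HT : T k /\ T (S k)) by apply HT.
  induction k as [|k [IHk IHSk]]; unfold T in *.
  - split; simpl.
    + lra.
    + assert (0 <= (q - p) ^ 2 * (q + p / 2)) by (apply Rmult_le_pos; [apply pow2_ge_0|lra]).
      nra.
  - split; [exact IHSk|].
    replace (S (S k) + 2)%nat with (S (S (k + 2))) by lia.
    replace (S (S k)) with (k + 2)%nat by lia.
    rewrite S_INR, S_INR, <- !tech_pow_Rmult, pow_add.
    assert (Hpk : 0 <= p ^ k) by (apply pow_le; lra).
    assert (0 <= INR (k + 2) / 2 * p ^ k * (q ^ 2 - p ^ 2) ^ 2).
    { apply Rmult_le_pos; [|apply pow2_ge_0]. apply Rmult_le_pos; [|lra].
      apply Rmult_le_pos; [apply pos_INR|lra]. }
    assert (Hstep : q ^ 2 * (p ^ (k + 2) + INR (k + 2) / 2 * p ^ k * (q ^ 2 - p ^ 2))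
                    <= q ^ 2 * q ^ (k + 2))
      by (apply Rmult_le_compat_l; [apply pow2_ge_0|exact IHk]).
    rewrite pow_add in Hstep. simpl in *. nra.
Qed.

Lemma ball_profile_subgradient d b : (2 <= d)%nat ->
  exists c, 0 <= c /\ forall y, ball_profile d b + c * (y - b) <= ball_profile d y.
Proof.
  intro Hd. destruct (Rle_dec b 0) as [Hb|Hb].
  - exists 0. split; [lra|]. intro y.
    rewrite ball_profile_nonpos by (lia || lra). pose proof (ball_profile_nonneg d y). lra.
  - set (p := sqrt b). replace d with ((d - 2) + 2)%nat by lia.
    exists (INR (d - 2 + 2) / 2 * p ^ (d - 2)). split.
    { apply Rmult_le_pos; [apply Rmult_le_pos; [apply pos_INR|lra]|apply pow_le, sqrt_pos]. }
    intro y. set (q := sqrt (Rmax y 0)).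
    assert (Hp2 : p ^ 2 = b) by (unfold p; rewrite <- Rsqr_pow2; apply Rsqr_sqrt; lra).
    assert (Hq2 : q ^ 2 = Rmax y 0) by (unfold q; rewrite <- Rsqr_pow2; apply Rsqr_sqrt, Rmax_r).
    assert (Hc : 0 <= INR (d - 2 + 2) / 2 * p ^ (d - 2))
      by (apply Rmult_le_pos; [apply Rmult_le_pos; [apply pos_INR|lra]|apply pow_le, sqrt_pos]).
    assert (y <= Rmax y 0) by apply Rmax_l.
    pose proof (pow_tangent_sq (d - 2) p q (sqrt_pos _) (sqrt_pos _)).
    unfold ball_profile. rewrite Rmax_left by lra. fold p q. rewrite Hp2, Hq2 in *. nra.
Qed.

Lemma ball_profile_convex d x y l : (2 <= d)%nat -> 0 <= l <= 1 ->
  ball_profile d (l * x + (1 - l) * y) <= l * ball_profile d x + (1 - l) * ball_profile d y.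
Proof.
  intros Hd Hl. destruct (ball_profile_subgradient d (l * x + (1 - l) * y) Hd) as [c [_ Hc]].
  pose proof (Hc x). pose proof (Hc y). nra.
Qed.

(** * Wallis integrals and Cavalieri's principle *)

Definition wallis (n : nat) : R := RInt (fun t => cos t ^ n) (-(PI/2)) (PI/2).

Lemma ex_RInt_cos_pow n a b : ex_RInt (fun t => cos t ^ n) a b.
Proof.
  apply (@ex_RInt_continuous R_CompleteNormedModule). intros t _.
  apply continuity_pt_filterlim. reg.
Qed.

Lemma wallis_0 : wallis 0 = PI.
Proof. unfold wallis. simpl pow. rewrite RInt_const. unfold scal; simpl; unfold mult; simpl. lra. Qed.

Lemma wallis_1 : wallis 1 = 2.
Proof.
  assert (H : is_RInt (fun t => cos t ^ 1) (-(PI/2)) (PI/2) (minus (sin (PI/2)) (sin (-(PI/2))))).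
  { apply (@is_RInt_derive R_CompleteNormedModule).
    - intros x _. auto_derive; auto. ring.
    - intros x _. apply continuity_pt_filterlim. reg. }
  rewrite sin_neg, sin_PI2 in H. unfold wallis. rewrite (is_RInt_unique _ _ _ _ H).
  unfold minus, plus, opp; simpl; ring.
Qed.

(* Integration by parts: the integrand is the derivative of sin t * cos t ^ (n+1). *)
Lemma wallis_rec n : INR (n + 2) * wallis (n + 2) = INR (n + 1) * wallis n.
Proof.
  assert (Hparts : is_RInt (fun t => INR (n + 2) * cos t ^ (n + 2) - INR (n + 1) * cos t ^ n)
                     (-(PI/2)) (PI/2) 0).
  { replace 0 with (minus (sin (PI/2) * cos (PI/2) ^ (n + 1))
                          (sin (-(PI/2)) * cos (-(PI/2)) ^ (n + 1))).
    2:{ rewrite cos_neg, cos_PI2, pow_i by lia. unfold minus, plus, opp; simpl; ring. }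
    apply (@is_RInt_derive R_CompleteNormedModule (fun t => sin t * cos t ^ (n + 1))).
    - intros x _. auto_derive; auto.
      replace (n + 1)%nat with (S n) by lia. replace (n + 2)%nat with (S (S n)) by lia.
      rewrite !S_INR. simpl pred.
      simpl. replace (sin x * (1 * - sin x * ((INR n + 1) * cos x ^ n)))
        with (- (sin x)² * ((INR n + 1) * cos x ^ n)) by (unfold Rsqr; ring).
      rewrite sin2. unfold Rsqr. ring.
    - intros x _. apply continuity_pt_filterlim. reg. }
  assert (Hlin : is_RInt (fun t => INR (n + 2) * cos t ^ (n + 2) - INR (n + 1) * cos t ^ n)
                   (-(PI/2)) (PI/2) (INR (n + 2) * wallis (n + 2) - INR (n + 1) * wallis n)).
  { apply (@is_RInt_minus R_NormedModule); apply (@is_RInt_scal R_NormedModule);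
      apply (@RInt_correct R_CompleteNormedModule), ex_RInt_cos_pow. }
  pose proof (is_RInt_unique _ _ _ _ Hparts) as E1.
  pose proof (is_RInt_unique _ _ _ _ Hlin) as E2. lra.
Qed.

Lemma unit_ball_vol_pos d : 0 < unit_ball_vol d.
Proof.
  enough (H : forall d, 0 < unit_ball_vol d /\ 0 < unit_ball_vol (S d)) by apply H.
  clear d. induction d as [|d [IH1 IH2]]; (split; [simpl; lra || assumption|]).
  - simpl. lra.
  - change (unit_ball_vol (S (S d))) with (2 * PI / INR (S (S d)) * unit_ball_vol d).
    pose proof PI_RGT_0. pose proof (lt_0_INR (S (S d)) ltac:(lia)).
    apply Rmult_lt_0_compat; [apply Rdiv_lt_0_compat|]; lra.
Qed.

Lemma unit_ball_vol_S d : unit_ball_vol (S d) = unit_ball_vol d * wallis (S d).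
Proof.
  enough (H : forall d, unit_ball_vol (S d) = unit_ball_vol d * wallis (S d) /\
                        unit_ball_vol (S (S d)) = unit_ball_vol (S d) * wallis (S (S d)))
    by apply H.
  clear d. induction d as [|d [IH1 IH2]]; split.
  - simpl. rewrite wallis_1. ring.
  - pose proof (wallis_rec 0) as Hrec. rewrite wallis_0 in Hrec. simpl in *. lra.
  - exact IH2.
  - pose proof (wallis_rec (S d)) as Hrec.
    replace (S d + 2)%nat with (S (S (S d))) in Hrec by lia.
    replace (S d + 1)%nat with (S (S d)) in Hrec by lia.
    change (unit_ball_vol (S (S (S d)))) with (2 * PI / INR (S (S (S d))) * unit_ball_vol (S d)).
    change (unit_ball_vol (S (S d))) with (2 * PI / INR (S (S d)) * unit_ball_vol d).
    rewrite IH1.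
    assert (0 < INR (S (S d))) by (apply lt_0_INR; lia).
    assert (0 < INR (S (S (S d)))) by (apply lt_0_INR; lia).
    replace (wallis (S (S (S d)))) with (INR (S (S d)) * wallis (S d) / INR (S (S (S d))))
      by (field_simplify_eq; lra).
    field; lra.
Qed.

Lemma RInt_zero (f : R -> R) a b : (forall x, Rmin a b < x < Rmax a b -> f x = 0) -> RInt f a b = 0.
Proof.
  intro H. rewrite (RInt_ext f (fun _ => 0)) by exact H. rewrite RInt_const.
  unfold scal; simpl; unfold mult; simpl. ring.
Qed.

Lemma RInt_ball_profile_centered d r : 0 < r ->
  RInt (fun t => ball_profile d (r ^ 2 - t ^ 2)) (-r) r = r ^ S d * wallis (S d).
Proof.
  intro Hr. pose proof PI_RGT_0.
  assert (Hsub := RInt_comp (fun t => ball_profile d (r ^ 2 - t ^ 2))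
                    (fun s => r * sin s) (fun s => r * cos s) (-(PI/2)) (PI/2)).
  cbv beta in Hsub. rewrite sin_neg, sin_PI2, Rmult_1_r in Hsub.
  rewrite <- Ropp_mult_distr_r, Rmult_1_r in Hsub.
  rewrite <- Hsub.
  - unfold wallis. rewrite <- (RInt_scal (V := R_CompleteNormedModule)) by apply ex_RInt_cos_pow.
    apply RInt_ext. intros s Hs.
    rewrite Rmin_left, Rmax_right in Hs by lra.
    assert (Hc : 0 < cos s) by (apply cos_gt_0; lra).
    replace (r ^ 2 - (r * sin s) ^ 2) with ((r * cos s) ^ 2)
      by (pose proof (sin2_cos2 s); unfold Rsqr in *; nra).
    rewrite ball_profile_sq by nra.
    unfold scal; simpl; unfold mult; simpl. rewrite Rpow_mult_distr. ring.
  - intros s _. apply (continuous_comp (fun t => r ^ 2 - t ^ 2)); [|apply continuous_ball_profile].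
    apply continuity_pt_filterlim. reg.
  - intros s _. split.
    + auto_derive; auto. ring.
    + apply continuity_pt_filterlim. reg.
Qed.

(* Cavalieri: the slices of the (d+1)-ball of squared radius B are d-balls of squared radius B - t^2. *)
Lemma RInt_ball_profile_slices d B M : (1 <= d)%nat -> 0 <= M -> B <= M ^ 2 ->
  unit_ball_vol d * RInt (fun t => ball_profile d (B - t ^ 2)) (-M) M
  = unit_ball_vol (S d) * ball_profile (S d) B.
Proof.
  intros Hd HM HBM. set (f := fun t => ball_profile d (B - t ^ 2)).
  destruct (Rle_dec B 0) as [HB|HB].
  - rewrite (ball_profile_nonpos (S d)), RInt_zero by
      (lia || lra || (intros; unfold f; apply ball_profile_nonpos; [lia|nra])).
    ring.
  - set (r := sqrt B).
    assert (Hr : 0 < r) by (apply sqrt_lt_R0; lra).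
    assert (Hr2 : B = r ^ 2) by (unfold r; rewrite <- Rsqr_pow2, Rsqr_sqrt; lra).
    assert (HrM : r <= M) by (apply Rnot_lt_le; intro; nra).
    rewrite <- (RInt_Chasles f (-M) (-r) M), <- (RInt_Chasles f (-r) r M)
      by apply ex_RInt_ball_profile_quad.
    rewrite (RInt_zero f (-M) (-r)), (RInt_zero f r M).
    2, 3: intros x Hx; rewrite Rmin_left, Rmax_right in Hx by lra;
          unfold f; apply ball_profile_nonpos; [lia|nra].
    unfold f. rewrite Hr2, RInt_ball_profile_centered, unit_ball_vol_S, ball_profile_sq by lra.
    unfold plus; simpl. ring.
Qed.

(** * Sums over -K..K versus integrals *)

Fixpoint zsum (f : R -> R) (K : nat) : R :=
  match K with
  | O => f 0
  | S k => zsum f k + f (INR (S k)) + f (- INR (S k))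
  end.

Lemma zsum_le f g K : (forall x, f x <= g x) -> zsum f K <= zsum g K.
Proof.
  intro Hfg. induction K as [|K IH]; cbn [zsum]; [apply Hfg|].
  pose proof (Hfg (INR (S K))). pose proof (Hfg (- INR (S K))). lra.
Qed.

Lemma zsum_scal c f K : zsum (fun x => c * f x) K = c * zsum f K.
Proof. induction K as [|K IH]; cbn [zsum]; [|rewrite IH]; ring. Qed.

Lemma zsum_const c K : zsum (fun _ => c) K = (2 * INR K + 1) * c.
Proof. induction K as [|K IH]; cbn [zsum]; [|rewrite IH, S_INR]; simpl; ring. Qed.

Lemma zsum_ext f g K :
  (forall k, (k <= K)%nat -> f (INR k) = g (INR k) /\ f (- INR k) = g (- INR k)) ->
  zsum f K = zsum g K.
Proof.
  intro Hfg. induction K as [|K IH]; cbn [zsum].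
  - apply (Hfg 0%nat); lia.
  - destruct (Hfg (S K)) as [-> ->]; [lia|]. rewrite IH; auto.
Qed.

Lemma zsum_pad f K K' : (K <= K')%nat ->
  (forall k, (K < k)%nat -> f (INR k) = 0 /\ f (- INR k) = 0) -> zsum f K' = zsum f K.
Proof.
  intros HKK' Hf. induction HKK' as [|K' HKK' IH]; [reflexivity|].
  cbn [zsum]. destruct (Hf (S K')) as [-> ->]; [lia|]. rewrite IH. ring.
Qed.

Lemma zsum_RInt_midpoints (f : R -> R) K : (forall a b, ex_RInt f a b) ->
  zsum (fun z => RInt f (z - 1/2) (z + 1/2)) K = RInt f (- (INR K + 1/2)) (INR K + 1/2).
Proof.
  intro Hf. induction K as [|K IH]; cbn [zsum].
  - simpl. f_equal; lra.
  - rewrite IH, S_INR.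
    replace (- (INR K + 1) - 1/2) with (- (INR K + 1 + 1/2)) by lra.
    replace (- (INR K + 1) + 1/2) with (- (INR K + 1/2)) by lra.
    replace (INR K + 1 - 1/2) with (INR K + 1/2) by lra.
    rewrite <- (RInt_Chasles f (- (INR K + 1 + 1/2)) (- (INR K + 1/2)) (INR K + 1 + 1/2)),
            <- (RInt_Chasles f (- (INR K + 1/2)) (INR K + 1/2) (INR K + 1 + 1/2)) by apply Hf.
    unfold plus; simpl. ring.
Qed.

Lemma RInt_le_zsum_trapezoid (f g : R -> R) K : (forall a b, ex_RInt f a b) ->
  (forall z, 0 <= g z) -> (forall z, RInt f z (z + 1) <= (g z + g (z + 1)) / 2) ->
  RInt f (- INR K) (INR K) <= zsum g K.
Proof.
  intros Hf Hg Htrap.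
  enough (H : RInt f (- INR K) (INR K) <= zsum g K - (g (INR K) + g (- INR K)) / 2)
    by (pose proof (Hg (INR K)); pose proof (Hg (- INR K)); lra).
  induction K as [|K IH]; cbn [zsum].
  - simpl. rewrite Ropp_0, RInt_point. unfold zero; simpl. lra.
  - rewrite S_INR.
    rewrite <- (RInt_Chasles f (- (INR K + 1)) (- INR K) (INR K + 1)),
            <- (RInt_Chasles f (- INR K) (INR K) (INR K + 1)) by apply Hf.
    pose proof (Htrap (INR K)) as Hright. pose proof (Htrap (- (INR K + 1))) as Hleft.
    replace (- (INR K + 1) + 1) with (- INR K) in Hleft by ring.
    unfold plus; simpl. lra.
Qed.

(* Integrate a supporting line of the convex profile at B - z^2: its quadratic part has mean 1/6 >= 0. *)
Lemma ball_profile_le_RInt_midpoint d B z : (2 <= d)%nat ->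
  ball_profile d (B - z ^ 2) <= RInt (fun t => ball_profile d (B + 1/4 - t ^ 2)) (z - 1/2) (z + 1/2).
Proof.
  intro Hd. set (b := B - z ^ 2).
  destruct (ball_profile_subgradient d b Hd) as [c [Hc Hsupp]].
  set (lower := fun t => ball_profile d b + c * (z ^ 2 + 1/4 - t ^ 2)).
  assert (Hlower : is_RInt lower (z - 1/2) (z + 1/2) (ball_profile d b + c / 6)).
  { set (F := fun t => ball_profile d b * t + c * ((z ^ 2 + 1/4) * t - t ^ 3 / 3)).
    replace (ball_profile d b + c / 6) with (minus (F (z + 1/2)) (F (z - 1/2)))
      by (unfold F, minus, plus, opp; simpl; field).
    apply (@is_RInt_derive R_CompleteNormedModule).
    - intros t _. unfold F, lower. auto_derive; auto. field.
    - intros t _. apply continuity_pt_filterlim. unfold lower. reg. }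
  apply Rle_trans with (RInt lower (z - 1/2) (z + 1/2)).
  { rewrite (is_RInt_unique _ _ _ _ Hlower). lra. }
  apply RInt_le; [lra | eexists; exact Hlower | apply ex_RInt_ball_profile_quad |].
  intros t _. unfold lower. specialize (Hsupp (B + 1/4 - t ^ 2)). unfold b in *. lra.
Qed.

Lemma RInt_ball_profile_le_trapezoid d B z : (2 <= d)%nat ->
  RInt (fun t => ball_profile d (B - 1/4 - t ^ 2)) z (z + 1)
  <= (ball_profile d (B - z ^ 2) + ball_profile d (B - (z + 1) ^ 2)) / 2.
Proof.
  intro Hd. set (P := ball_profile d (B - z ^ 2)). set (Q := ball_profile d (B - (z + 1) ^ 2)).
  set (chord := fun t => (z + 1 - t) * P + (t - z) * Q).
  assert (Hchord : is_RInt chord z (z + 1) ((P + Q) / 2)).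
  { set (F := fun t => - (z + 1 - t) ^ 2 / 2 * P + (t - z) ^ 2 / 2 * Q).
    replace ((P + Q) / 2) with (minus (F (z + 1)) (F z)) by (unfold F, minus, plus, opp; simpl; field).
    apply (@is_RInt_derive R_CompleteNormedModule).
    - intros t _. unfold F, chord. auto_derive; auto. field.
    - intros t _. apply continuity_pt_filterlim. unfold chord. reg. }
  rewrite <- (is_RInt_unique _ _ _ _ Hchord).
  apply RInt_le; [lra | apply ex_RInt_ball_profile_quad | eexists; exact Hchord |].
  intros t Ht. unfold chord.
  (* B - 1/4 - t^2 lies below the chord of y = B - s^2 between s = z and s = z + 1 *)
  apply Rle_trans with (ball_profile d ((z + 1 - t) * (B - z ^ 2) + (1 - (z + 1 - t)) * (B - (z + 1) ^ 2))).
  - apply ball_profile_le. pose proof (pow2_ge_0 (t - z - 1/2)). nra.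
  - replace (t - z) with (1 - (z + 1 - t)) by ring. apply ball_profile_convex; auto. lra.
Qed.

(** * Counting lattice points by slicing *)

Lemma exists_nat_floor x : 0 <= x -> exists m : nat, INR m <= x < INR m + 1.
Proof.
  intro Hx. destruct (archimed x) as [Hup1 Hup2].
  assert (Hup : (0 < up x)%Z) by (apply lt_IZR; lra).
  exists (Z.to_nat (up x - 1)). rewrite INR_IZR_INZ, Z2Nat.id, minus_IZR by lia. lra.
Qed.

Lemma exists_nat_sq_ge x : exists K : nat, x <= INR K ^ 2.
Proof.
  destruct (INR_unbounded (Rabs x + 1)) as [K HK]. exists K.
  pose proof (Rle_abs x). pose proof (Rabs_pos x). nra.
Qed.

Lemma zrange_S K : zrange (S K) = (- Z.of_nat (S K))%Z :: zrange K ++ Z.of_nat (S K) :: nil.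
Proof.
  unfold zrange. replace (2 * S K + 1)%nat with (S (S (2 * K + 1))) by lia.
  change (seq 0 (S (S (2 * K + 1)))) with (0%nat :: seq 1 (S (2 * K + 1))).
  rewrite seq_S, <- seq_shift. cbn [map]. rewrite map_app, map_map. cbn [map].
  replace (Z.of_nat 0 - Z.of_nat (S K))%Z with (- Z.of_nat (S K))%Z by lia.
  replace (Z.of_nat (1 + (2 * K + 1)) - Z.of_nat (S K))%Z with (Z.of_nat (S K)) by lia.
  do 2 f_equal. apply map_ext. intro. lia.
Qed.

Lemma fold_right_add_acc {A} (h : A -> nat) l a :
  fold_right (fun z acc => (h z + acc)%nat) a l = (fold_right (fun z acc => (h z + acc)%nat) 0%nat l + a)%nat.
Proof. induction l as [|z l IH]; simpl; [|rewrite IH]; lia. Qed.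

Lemma fold_zrange_zsum (h : R -> nat) K :
  INR (fold_right (fun z acc => (h (IZR z) + acc)%nat) 0%nat (zrange K)) = zsum (fun x => INR (h x)) K.
Proof.
  induction K as [|K IH].
  { change (zrange 0) with (0%Z :: nil). cbn [fold_right zsum]. now rewrite Nat.add_0_r. }
  rewrite zrange_S. cbn [fold_right zsum]. rewrite fold_right_app, fold_right_add_acc. cbn [fold_right].
  rewrite !plus_INR, IH, opp_IZR, <- INR_IZR_INZ. change (INR 0) with 0. lra.
Qed.

Lemma lat_neg d x : x < 0 -> lat d x = 0%nat.
Proof.
  revert x; induction d as [|d IH]; intros x Hx; simpl.
  - destruct (Rle_dec 0 x); [lra|reflexivity].
  - induction (zrange (Z.to_nat (up x))) as [|z l IHl]; simpl; [reflexivity|].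
    rewrite IHl, IH; [reflexivity|]. pose proof (pow2_ge_0 (IZR z)). lra.
Qed.

Lemma lat_0 y : 0 <= y -> lat 0 y = 1%nat.
Proof. intro Hy. simpl. destruct (Rle_dec 0 y); [reflexivity|lra]. Qed.

(* Slicing along the first coordinate; any range -K..K containing all integers z with z^2 <= r2 will do. *)
Lemma lat_S_zsum d r2 K : r2 < (INR K + 1) ^ 2 ->
  INR (lat (S d) r2) = zsum (fun z => INR (lat d (r2 - z ^ 2))) K.
Proof.
  set (f := fun z => INR (lat d (r2 - z ^ 2))).
  assert (Hvanish : forall K, r2 < (INR K + 1) ^ 2 ->
            forall k, (K < k)%nat -> f (INR k) = 0 /\ f (- INR k) = 0).
  { intros K' HK' k Hk. apply le_INR in Hk. rewrite S_INR in Hk. unfold f.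
    rewrite !lat_neg; [split; reflexivity| |]; pose proof (pos_INR K'); nra. }
  intro HK. set (K0 := Z.to_nat (up r2)).
  assert (HK0 : r2 < (INR K0 + 1) ^ 2).
  { destruct (Rle_dec r2 0); [pose proof (pos_INR K0); nra|].
    destruct (archimed r2) as [Hup _].
    assert (Hpos : (0 < up r2)%Z) by (apply lt_IZR; lra).
    unfold K0. rewrite INR_IZR_INZ, Z2Nat.id by lia. nra. }
  change (lat (S d) r2) with
    (fold_right (fun z acc => ((fun x => lat d (r2 - x ^ 2)) (IZR z) + acc)%nat) 0%nat (zrange K0)).
  rewrite fold_zrange_zsum. fold f.
  rewrite <- (zsum_pad f K0 (max K K0)), <- (zsum_pad f K (max K K0));
    [reflexivity | lia | now apply Hvanish | lia | now apply Hvanish].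
Qed.

Lemma lat1_floor x m : 0 <= x -> INR m <= sqrt x < INR m + 1 -> INR (lat 1 x) = 2 * INR m + 1.
Proof.
  intros Hx Hm. pose proof (sqrt_sqrt x Hx). pose proof (sqrt_pos x).
  rewrite (lat_S_zsum 0 x m) by nra.
  rewrite <- Rmult_1_r, <- zsum_const. apply zsum_ext. intros k Hk.
  apply le_INR in Hk. pose proof (pos_INR k).
  rewrite !lat_0 by nra. split; reflexivity.
Qed.

Lemma lat1_le_sqrt x : 0 <= x -> INR (lat 1 x) <= 2 * sqrt x + 1.
Proof.
  intro Hx. destruct (exists_nat_floor (sqrt x) (sqrt_pos x)) as [m Hm].
  rewrite (lat1_floor x m) by auto. lra.
Qed.

Lemma lat1_le_mono x y : 0 <= x <= y -> INR (lat 1 x) <= INR (lat 1 y).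
Proof.
  intro Hxy.
  destruct (exists_nat_floor (sqrt x) (sqrt_pos x)) as [m Hm].
  destruct (exists_nat_floor (sqrt y) (sqrt_pos y)) as [n Hn].
  rewrite (lat1_floor x m), (lat1_floor y n) by lra.
  assert (sqrt x <= sqrt y) by (apply sqrt_le_1_alt; lra).
  assert (Hmn : INR m < INR (S n)) by (rewrite S_INR; lra).
  apply INR_lt in Hmn. assert (Hle : (m <= n)%nat) by lia. apply le_INR in Hle. lra.
Qed.

Lemma unit_ball_vol_2 : unit_ball_vol 2 = PI.
Proof. simpl. field. Qed.

Lemma ball_profile_2 y : ball_profile 2 y = Rmax y 0.
Proof. unfold ball_profile. rewrite <- Rsqr_pow2. apply Rsqr_sqrt, Rmax_r. Qed.

(* Every line z = const meets the disc in at most 2 sqrt A + 1 points. *)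
Lemma lat2_le A : INR (lat 2 A) <= 2 * unit_ball_vol 2 * ball_profile 2 (A + INR 2 / 4).
Proof.
  rewrite unit_ball_vol_2, ball_profile_2. pose proof PI_RGT_0. pose proof PI2_3_2.
  replace (INR 2 / 4) with (1/2) by (simpl; lra).
  destruct (Rlt_dec A 0) as [HA|HA].
  { rewrite lat_neg by exact HA. pose proof (Rmax_r (A + 1/2) 0). change (INR 0) with 0. nra. }
  set (s := sqrt A). assert (Hs : 0 <= s) by apply sqrt_pos.
  assert (Hss : s * s = A) by (apply sqrt_sqrt; lra).
  destruct (exists_nat_floor s Hs) as [m Hm].
  assert (HAm : A < (INR m + 1) ^ 2) by nra.
  assert (Hcount : INR (lat 2 A) <= (2 * s + 1) * INR (lat 1 A)).
  { rewrite (lat_S_zsum 1 A m), (lat_S_zsum 0 A m), <- zsum_scal by exact HAm.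
    apply zsum_le. intro z. destruct (Rle_dec 0 (A - z ^ 2)) as [Hz|Hz].
    - rewrite lat_0 by exact Hz. pose proof (lat1_le_sqrt _ Hz).
      assert (sqrt (A - z ^ 2) <= s) by (apply sqrt_le_1_alt; pose proof (pow2_ge_0 z); lra).
      change (INR 1) with 1. lra.
    - rewrite !lat_neg by lra. change (INR 0) with 0. lra. }
  pose proof (lat1_le_sqrt A (Rnot_lt_le _ _ HA)). fold s in H1.
  assert ((2 * s + 1) * INR (lat 1 A) <= (2 * s + 1) * (2 * s + 1)) by (apply Rmult_le_compat_l; lra).
  rewrite Rmax_left by lra. pose proof (pow2_ge_0 (s - 1)). nra.
Qed.

(* The disc of squared radius A contains the square [-sqrt(A/2), sqrt(A/2)]^2. *)
Lemma ball_profile_le_lat2 A : / 8 * unit_ball_vol 2 * ball_profile 2 (A - INR 2 / 4) <= INR (lat 2 A).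
Proof.
  rewrite unit_ball_vol_2, ball_profile_2. pose proof PI_RGT_0. pose proof PI_4.
  replace (INR 2 / 4) with (1/2) by (simpl; lra).
  destruct (Rle_dec A (1/2)) as [HA|HA].
  { rewrite Rmax_right by lra. rewrite Rmult_0_r. apply pos_INR. }
  rewrite Rmax_left by lra.
  set (s := sqrt (A / 2)). assert (Hs : 0 <= s) by apply sqrt_pos.
  assert (Hss : s * s = A / 2) by (apply sqrt_sqrt; lra).
  destruct (exists_nat_floor s Hs) as [m Hm].
  destruct (exists_nat_floor (sqrt A) (sqrt_pos A)) as [K HK].
  assert (HAK : A < (INR K + 1) ^ 2) by (pose proof (sqrt_sqrt A ltac:(lra)); pose proof (sqrt_pos A); nra).
  assert (Hcount : INR (lat 1 (A / 2)) * INR (lat 1 (A / 2)) <= INR (lat 2 A)).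
  { rewrite (lat_S_zsum 1 A K) by exact HAK.
    rewrite (lat_S_zsum 0 (A / 2) K) at 2 by lra. rewrite <- zsum_scal.
    apply zsum_le. intro z. destruct (Rle_dec 0 (A / 2 - z ^ 2)) as [Hz|Hz].
    - rewrite lat_0 by exact Hz. change (INR 1) with 1. rewrite Rmult_1_r. apply lat1_le_mono. lra.
    - rewrite (lat_neg 0) by lra. change (INR 0) with 0. rewrite Rmult_0_r. apply pos_INR. }
  rewrite (lat1_floor (A / 2) m) in Hcount by (fold s; lra).
  pose proof (pos_INR m).
  destruct (Rle_dec s 1).
  - assert (1 <= (2 * INR m + 1) * (2 * INR m + 1)) by nra. nra.
  - assert ((2 * s - 1) * (2 * s - 1) <= (2 * INR m + 1) * (2 * INR m + 1))
      by (apply Rmult_le_compat; lra).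
    nra.
Qed.

Lemma lat_le_ball_profile d r2 : (2 <= d)%nat ->
  INR (lat d r2) <= 2 * unit_ball_vol d * ball_profile d (r2 + INR d / 4).
Proof.
  intro Hd. revert r2. induction Hd as [|d Hd IH]; intro r2; [apply lat2_le|].
  rewrite S_INR. set (B := r2 + INR d / 4).
  set (h := fun t => ball_profile d (B + 1/4 - t ^ 2)).
  destruct (exists_nat_sq_ge (B + 1/4)) as [K HK].
  pose proof (pos_INR K). pose proof (pos_INR d). pose proof (unit_ball_vol_pos d).
  rewrite (lat_S_zsum d r2 K) by (unfold B in HK; nra).
  apply Rle_trans with (2 * unit_ball_vol d * zsum (fun z => RInt h (z - 1/2) (z + 1/2)) K).
  { rewrite <- zsum_scal. apply zsum_le. intro z.
    apply Rle_trans with (2 * unit_ball_vol d * ball_profile d (B - z ^ 2)).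
    - replace (B - z ^ 2) with (r2 - z ^ 2 + INR d / 4) by (unfold B; ring). apply IH.
    - apply Rmult_le_compat_l; [lra|]. apply ball_profile_le_RInt_midpoint, Hd. }
  rewrite zsum_RInt_midpoints by apply ex_RInt_ball_profile_quad.
  unfold h. rewrite Rmult_assoc, RInt_ball_profile_slices by (lia || nra).
  replace (r2 + (INR d + 1) / 4) with (B + 1/4) by (unfold B; field). lra.
Qed.

Lemma ball_profile_le_lat d r2 : (2 <= d)%nat ->
  / 8 * unit_ball_vol d * ball_profile d (r2 - INR d / 4) <= INR (lat d r2).
Proof.
  intro Hd. revert r2. induction Hd as [|d Hd IH]; intro r2; [apply ball_profile_le_lat2|].
  rewrite S_INR. set (B := r2 - INR d / 4).
  set (g := fun z => ball_profile d (B - z ^ 2)).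
  destruct (exists_nat_sq_ge r2) as [K HK].
  pose proof (pos_INR K). pose proof (pos_INR d). pose proof (unit_ball_vol_pos d).
  rewrite (lat_S_zsum d r2 K) by nra.
  apply Rle_trans with (/ 8 * unit_ball_vol d * zsum g K).
  2:{ rewrite <- zsum_scal. apply zsum_le. intro z. unfold g.
      replace (B - z ^ 2) with (r2 - z ^ 2 - INR d / 4) by (unfold B; ring). apply IH. }
  replace (r2 - (INR d + 1) / 4) with (B - 1/4) by (unfold B; field).
  rewrite Rmult_assoc, <- (RInt_ball_profile_slices d (B - 1/4) (INR K));
    [| lia | lra | unfold B; nra].
  rewrite <- Rmult_assoc. apply Rmult_le_compat_l; [lra|].
  apply RInt_le_zsum_trapezoid; [apply ex_RInt_ball_profile_quad | intro; apply ball_profile_nonneg |].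
  intro z. apply RInt_ball_profile_le_trapezoid, Hd.
Qed.

(** * Balls of radius N >= d *)

Lemma pow_one_sub_ge n x : 0 <= x <= 1 -> 1 - INR n * x <= (1 - x) ^ n.
Proof.
  intro Hx. induction n as [|n IH]; simpl pow; [simpl; lra|].
  rewrite S_INR. pose proof (pos_INR n).
  assert ((1 - x) * (1 - INR n * x) <= (1 - x) * (1 - x) ^ n) by (apply Rmult_le_compat_l; lra).
  nra.
Qed.

Lemma exp_pow x n : exp x ^ n = exp (INR n * x).
Proof.
  induction n as [|n IH]; simpl pow; [rewrite Rmult_0_l, exp_0; reflexivity|].
  rewrite IH, S_INR, <- exp_plus. f_equal. ring.
Qed.

Lemma ball_profile_sub_ge d N a : 0 < N -> 0 <= a <= N ^ 2 ->
  N ^ d * (1 - INR d * (a / N ^ 2)) <= ball_profile d (N ^ 2 - a).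
Proof.
  intros HN Ha. set (x := a / N ^ 2).
  assert (HN2 : 0 < N ^ 2) by (apply pow_lt, HN).
  assert (Ex : x * N ^ 2 = a) by (unfold x; field; lra).
  assert (Hx : 0 <= x <= 1) by (clearbody x; split; nra).
  apply Rle_trans with ((N * (1 - x)) ^ d).
  { rewrite Rpow_mult_distr. apply Rmult_le_compat_l; [apply pow_le; lra|]. apply pow_one_sub_ge, Hx. }
  rewrite <- ball_profile_sq by nra. apply ball_profile_le.
  replace (N ^ 2 - a) with (N ^ 2 * (1 - x)) by (unfold x; field; lra). nra.
Qed.

Lemma ball_profile_add_le d N a : 0 < N -> 0 <= a ->
  ball_profile d (N ^ 2 + a) <= N ^ d * exp (INR d * (a / (2 * N ^ 2))).
Proof.
  intros HN Ha. set (e := exp (a / (2 * N ^ 2))). assert (He : 0 < e) by apply exp_pos.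
  rewrite <- exp_pow, <- Rpow_mult_distr. fold e.
  rewrite <- (ball_profile_sq d (N * e)) by nra.
  apply ball_profile_le. rewrite Rpow_mult_distr.
  replace (e ^ 2) with (exp (a / N ^ 2)) by (unfold e; rewrite exp_pow; f_equal; simpl; field; lra).
  pose proof (exp_ineq1_le (a / N ^ 2)).
  replace (N ^ 2 + a) with (N ^ 2 * (1 + a / N ^ 2)) by (field; lra).
  apply Rmult_le_compat_l; nra.
Qed.

Lemma exp_le x y : x <= y -> exp x <= exp y.
Proof. intro Hxy. destruct (Rle_lt_or_eq_dec _ _ Hxy) as [Hlt | ->]; [apply Rlt_le, exp_increasing|]; lra. Qed.

Lemma lattice_count_bounds_ge2 d N : (2 <= d)%nat -> INR d <= N ->
  ball_volume d N <= 11 * INR (lattice_count d N) /\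
  INR (lattice_count d N) <= 2 * exp (1 / 8) * ball_volume d N.
Proof.
  intros Hd HdN. unfold ball_volume, lattice_count.
  assert (H2d : 2 <= INR d) by (apply le_INR in Hd; simpl in Hd; lra).
  assert (HN : 0 < N) by lra.
  assert (HN2 : 0 < N ^ 2) by (apply pow_lt, HN).
  assert (HNd : 0 <= N ^ d) by (apply pow_le; lra).
  assert (Hratio : INR d * (INR d / 4 / N ^ 2) <= 1 / 4).
  { replace (INR d * (INR d / 4 / N ^ 2)) with (INR d * INR d / N ^ 2 / 4) by (field; lra).
    enough (INR d * INR d / N ^ 2 <= 1) by lra.
    apply Rmult_le_reg_r with (N ^ 2); [exact HN2|]. field_simplify; nra. }
  pose proof (unit_ball_vol_pos d) as Hvol. split.
  - pose proof (ball_profile_le_lat d (N ^ 2) Hd) as Hlat.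
    assert (Hprof : N ^ d * (1 - INR d * (INR d / 4 / N ^ 2)) <= ball_profile d (N ^ 2 - INR d / 4))
      by (apply ball_profile_sub_ge; [exact HN | nra]).
    assert (N ^ d * (3 / 4) <= N ^ d * (1 - INR d * (INR d / 4 / N ^ 2)))
      by (apply Rmult_le_compat_l; lra).
    assert (unit_ball_vol d * (N ^ d * (3 / 4)) <= unit_ball_vol d * ball_profile d (N ^ 2 - INR d / 4))
      by (apply Rmult_le_compat_l; lra).
    pose proof (pos_INR (lat d (N ^ 2))). lra.
  - pose proof (lat_le_ball_profile d (N ^ 2) Hd) as Hlat.
    pose proof (ball_profile_add_le d N (INR d / 4) HN ltac:(lra)) as Hprof.
    assert (exp (INR d * (INR d / 4 / (2 * N ^ 2))) <= exp (1 / 8)).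
    { apply exp_le. replace (INR d * (INR d / 4 / (2 * N ^ 2))) with (INR d * (INR d / 4 / N ^ 2) / 2)
        by (field; lra). lra. }
    assert (N ^ d * exp (INR d * (INR d / 4 / (2 * N ^ 2))) <= N ^ d * exp (1 / 8))
      by (apply Rmult_le_compat_l; lra).
    assert (unit_ball_vol d * ball_profile d (N ^ 2 + INR d / 4) <= unit_ball_vol d * (N ^ d * exp (1 / 8)))
      by (apply Rmult_le_compat_l; lra).
    lra.
Qed.

Lemma lattice_count_bounds d N : INR d <= N ->
  ball_volume d N <= 11 * INR (lattice_count d N) /\
  INR (lattice_count d N) <= 2 * exp (1 / 8) * ball_volume d N.
Proof.
  intro HdN. pose proof (exp_ineq1_le (1 / 8)).
  destruct d as [|[|d]]; [| |apply lattice_count_bounds_ge2; [lia | exact HdN]];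
    unfold ball_volume, lattice_count; simpl unit_ball_vol; simpl INR in HdN.
  - rewrite lat_0 by apply pow2_ge_0. simpl. lra.
  - destruct (exists_nat_floor N ltac:(lra)) as [m Hm].
    rewrite (lat1_floor (N ^ 2) m) by (try rewrite sqrt_pow2; lra || apply pow2_ge_0).
    pose proof (pos_INR m). rewrite pow_1. split; nra.
Qed.

Theorem lemma5p3 :
  exists C1 C2 : R, 0 < C1 /\ 0 < C2 /\
    forall (d : nat) (N : R), C1 * INR d <= N ->
      ball_volume d N <= C2 * INR (lattice_count d N) /\
      / C2 * ball_volume d N <= INR (lattice_count d N) /\
      INR (lattice_count d N) <= 2 * exp (1 / (8 * C1 ^ 2)) * ball_volume d N.
Proof.
  exists 1, 11. split; [lra|]. split; [lra|].
  intros d N HdN. rewrite Rmult_1_l in HdN.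
  replace (1 / (8 * 1 ^ 2)) with (1 / 8) by (simpl; field).
  destruct (lattice_count_bounds d N HdN) as [Hlower Hupper].
  split; [exact Hlower|]. split; [lra | exact Hupper].
Qed.
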